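(* Let $\mathbb{S}^2_\infty$ be the Euclidean unit sphere centered at the origin in $\mathbb{R}^3$, equipped with the $\ell^\infty$-metric, and $\mathbb{D}^3_\infty$ the Euclidean closed unit ball with the $\ell^\infty$-metric. Then: (1) $\mathcal{F}(\mathbb{S}^2_\infty)=\mathcal{E}(\mathbb{S}^2_\infty)$, and this set is isometric to the tight span $\mathbf{E}(\mathbb{S}^2_\infty)$; (2) $\mathcal{F}(\mathbb{D}^3_\infty)=\mathcal{E}(\mathbb{D}^3_\infty)=\mathcal{F}(\mathbb{S}^2_\infty)$, and this set is isometric to the tight span $\mathbf{E}(\mathbb{D}^3_\infty)$. In addition, $\mathbf{E}(\mathbb{D}^3_\infty)$ is isometric to $\mathbf{E}(\mathbb{S}^2_\infty)$.
   Context: $\mathbb{R}^3_\infty$ is $\mathbb{R}^3$ with the $\ell^\infty$-metric $d_\infty$. For $1\le i\le 3$, $\Lambda_i=\{x:x_i=\|x\|_\infty\}$ and $p+\xi\Lambda_i=\{p+\xi z:z\in\Lambda_i\}$ for $\xi\in\{\pm1\}$. For compact $X\subseteq\mathbb{R}^3_\infty$: $\mathcal{F}(X)$ is the set of points $p$ with $(p+\xi\Lambda_i)\cap X\ne\emptyset$ for all $i$ and $\xi$ ($X$-surrounding points); $\mathcal{E}(X)$ is the set of points $z\in\mathbb{R}^3$ such that for every $x\in X$ there is $y\in X$ with $d_\infty(x,z)+d_\infty(z,y)=d_\infty(x,y)$ ($X$-minimal points); both carry the metric $d_\infty$. For a metric space $X$, $\Delta(X)=\{f:X\to\mathbb{R}\text{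 bounded}:f(x)+f(x')\ge d_X(x,x')\}$ and the tight span $\mathbf{E}(X)$ is the set of pointwise-minimal elements of $\Delta(X)$ with the sup-norm metric. *)

From Stdlib Require Import Reals.
From Coquelicot Require Import Coquelicot.
Open Scope R_scope.

Record pt := Pt { px : R; py : R; pz : R }.

Inductive idx := I1 | I2 | I3.

Definition coord (p : pt) (i : idx) : R :=
  match i with I1 => px p | I2 => py p | I3 => pz p end.

Definition ptadd (p q : pt) : pt := Pt (px p + px q) (py p + py q) (pz p + pz q).
Definition ptscale (a : R) (p : pt) : pt := Pt (a * px p) (a * py p) (a * pz p).
Definition ptsub (p q : pt) : pt := ptadd p (ptscale (-1) q).

Definition ninf (p : pt) : R := Rmax (Rabs (px p)) (Rmax (Rabs (py p)) (Rabs (pz p))).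
Definition dinf (p q : pt) : R := ninf (ptsub p q).

Definition Lambda (i : idx) (x : pt) : Prop := coord x i = ninf x.

Definition cone_meets (X : pt -> Prop) (p : pt) (i : idx) (xi : R) : Prop :=
  exists z, Lambda i z /\ X (ptadd p (ptscale xi z)).

Definition surrounding (X : pt -> Prop) (p : pt) : Prop :=
  forall (i : idx) (xi : R), (xi = 1 \/ xi = -1) -> cone_meets X p i xi.

Definition minimal_pts (X : pt -> Prop) (z : pt) : Prop :=
  forall x, X x -> exists y, X y /\ dinf x z + dinf z y = dinf x y.

Definition in_Delta {T : Type} (d : T -> T -> R) (f : T -> R) : Prop :=
  (exists M, forall x, Rabs (f x) <= M) /\
  (forall x x', f x + f x' >= d x x').

Definition in_tight_span {T : Type} (d : T -> T -> R) (f : T -> R) : Prop :=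
  in_Delta d f /\
  (forall g, in_Delta d g -> (forall x, g x <= f x) -> forall x, g x = f x).

Definition tight_span {T : Type} (d : T -> T -> R) : Type :=
  { f : T -> R | in_tight_span d f }.

Definition supdist {T : Type} (f g : T -> R) : R :=
  real (Lub_Rbar (fun r => exists x, r = Rabs (f x - g x))).

Definition ts_dist {T : Type} (d : T -> T -> R) (f g : tight_span d) : R :=
  supdist (proj1_sig f) (proj1_sig g).

Definition sub (X : pt -> Prop) : Type := { p : pt | X p }.
Definition subd (X : pt -> Prop) (a b : sub X) : R := dinf (proj1_sig a) (proj1_sig b).

Definition isometric (A B : Type) (dA : A -> A -> R) (dB : B -> B -> R) : Prop :=
  exists phi : A -> B,
    (forall a a', dB (phi a) (phi a') = dA a a') /\ (forall b, exists a, phi a = b).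

Definition S2 (p : pt) : Prop := px p ^ 2 + py p ^ 2 + pz p ^ 2 = 1.
Definition D3 (p : pt) : Prop := px p ^ 2 + py p ^ 2 + pz p ^ 2 <= 1.

(* A surrounding point p is minimal for any X: if d(x, p) is attained on axis
   i, the cone of p along axis i pointing away from x contains some y of X, and
   p lies on a geodesic from x to y.  Conversely let S2 <= X <= D3; after a signed
   permutation of the coordinates we only need the cone p + Lambda_1.  Either
   some point of the sphere lies in that cone, or one lies strictly inside the
   opposite cone and the geodesic through p supplied by minimality leaves p
   through the cone; the only remaining case (p outside the cylinder over the
   unit disk and close to the plane x_1 = 0) contradicts minimality at the
   antipode of the radial projection of p.  Pushing points of D3 along the cone
   axis onto the sphere shows F(D3) = F(S2).  Finally p |-> d(p, .) maps F(X)
   isometrically onto E(X): d(p, .) is tight exactly when p is minimal (by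
   compactness a farthest point exists), a cone point realises the sup distance,
   and a tight f equals d(p, .) for p_i = sup_x (x_i - f x). *)

From Pilot Require Import Defs.
From Stdlib Require Import Reals Lra Psatz.
From Coquelicot Require Import Coquelicot.
From mathcomp Require Import all_boot all_algebra.
From mathcomp Require Import all_classical all_reals.
From mathcomp Require Import topology normedtype derive Rstruct Rstruct_topology.
Local Open Scope classical_set_scope.
Local Open Scope R_scope.
Notation coord := Defs.coord.

Lemma pt_eq a b : px a = px b -> py a = py b -> pz a = pz b -> a = b.
Proof. by case: a => ? ? ?; case: b => ? ? ? /= -> -> ->. Qed.

Lemma Rabs_sign e : e = 1 \/ e = -1 -> Rabs e = 1.
Proof. by case=> ->; rewrite ?Rabs_R1 ?Rabs_m1. Qed.

Lemma dinfE a b : dinf a b =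
  Rmax (Rabs (px a - px b)) (Rmax (Rabs (py a - py b)) (Rabs (pz a - pz b))).
Proof. by rewrite /dinf /ninf /= !Ropp_mult_distr_l_reverse !Rmult_1_l. Qed.

Lemma coord_le_dinf a b i : Rabs (coord a i - coord b i) <= dinf a b.
Proof.
have := Rmax_l (Rabs (py a - py b)) (Rabs (pz a - pz b)).
have := Rmax_r (Rabs (py a - py b)) (Rabs (pz a - pz b)).
have := Rmax_l (Rabs (px a - px b)) (Rmax (Rabs (py a - py b)) (Rabs (pz a - pz b))).
have := Rmax_r (Rabs (px a - px b)) (Rmax (Rabs (py a - py b)) (Rabs (pz a - pz b))).
by rewrite dinfE; case: i => /=; lra.
Qed.

Lemma dinf_attained a b : exists i, dinf a b = Rabs (coord a i - coord b i).
Proof.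
rewrite dinfE /Rmax.
case: Rle_dec => _; last by exists I1.
by case: Rle_dec => _; [exists I3 | exists I2].
Qed.

Lemma dinf_ge0 a b : 0 <= dinf a b.
Proof. exact: Rle_trans (Rabs_pos _) (coord_le_dinf a b I1). Qed.

Lemma dinf_sym a b : dinf a b = dinf b a.
Proof.
by rewrite !dinfE (Rabs_minus_sym (px a)) (Rabs_minus_sym (py a)) (Rabs_minus_sym (pz a)).
Qed.

Lemma dinf_refl a : dinf a a = 0.
Proof. by rewrite dinfE !Rminus_diag Rabs_R0 !Rmax_left; lra. Qed.

Lemma dinf_triangle a b c : dinf a c <= dinf a b + dinf b c.
Proof.
have [i ->] := dinf_attained a c.
have -> : coord a i - coord c i = (coord a i - coord b i) + (coord b i - coord c i) by ring.
apply: Rle_trans (Rabs_triang _ _) _.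
exact: Rplus_le_compat (coord_le_dinf a b i) (coord_le_dinf b c i).
Qed.

Lemma dinf_eq0 a b : dinf a b = 0 -> a = b.
Proof.
move=> ab; have coord_eq i : coord a i = coord b i.
  apply: Rminus_diag_uniq; apply: Rabs_eq_0.
  have := coord_le_dinf a b i; have := Rabs_pos (coord a i - coord b i); lra.
exact: pt_eq (coord_eq I1) (coord_eq I2) (coord_eq I3).
Qed.

Lemma dinf_between x p y : dinf x p + dinf p y = dinf x y -> exists i,
  [/\ Rabs (coord x i - coord p i) = dinf x p, Rabs (coord p i - coord y i) = dinf p y
    & 0 <= (coord x i - coord p i) * (coord p i - coord y i)].
Proof.
move=> geo; have [i xy] := dinf_attained x y; exists i.
have xpy : coord x i - coord y i = (coord x i - coord p i) + (coord p i - coord y i) by ring.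
have := coord_le_dinf x p i; have := coord_le_dinf p y i.
have := Rabs_triang (coord x i - coord p i) (coord p i - coord y i); rewrite -xpy.
move=> tri le_py le_xp; split; try lra.
have : Rabs (coord x i - coord y i)
  = Rabs (coord x i - coord p i) + Rabs (coord p i - coord y i) by lra.
by rewrite xpy; split_Rabs; nra.
Qed.

Lemma dinf_shift p z e : e = 1 \/ e = -1 -> dinf (ptadd p (ptscale e z)) p = ninf z.
Proof.
rewrite dinfE /ninf /=; case=> ->.
- by congr (Rmax (Rabs _) (Rmax (Rabs _) (Rabs _))); ring.
- by rewrite -(Rabs_Ropp (px z)) -(Rabs_Ropp (py z)) -(Rabs_Ropp (pz z));
    congr (Rmax (Rabs _) (Rmax (Rabs _) (Rabs _))); ring.
Qed.

Lemma coord_shift p z e i : coord (ptadd p (ptscale e z)) i = coord p i + e * coord z i.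
Proof. by case: i. Qed.

Lemma cone_meetsP X p i e : e = 1 \/ e = -1 ->
  cone_meets X p i e <-> exists y, X y /\ e * (coord y i - coord p i) = dinf y p.
Proof.
move=> he; have ee : e * e = 1 by case: he => ->; ring.
split.
- move=> [z [Lz Xz]]; exists (ptadd p (ptscale e z)); split => //.
  rewrite dinf_shift // coord_shift -Lz.
  have -> : e * (coord p i + e * coord z i - coord p i) = e * e * coord z i by ring.
  by rewrite ee Rmult_1_l.
- move=> [y [Xy ey]]; exists (ptscale e (ptsub y p)); split.
  + rewrite /Lambda.
    have -> : ninf (ptscale e (ptsub y p)) = dinf y p.
      rewrite -(dinf_shift p _ _ he); congr dinf.
      by apply: pt_eq => /=; rewrite -!Rmult_assoc ee; ring.
    by rewrite -ey; case: i {ey} => /=; ring.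
  + have -> : ptadd p (ptscale e (ptscale e (ptsub y p))) = y.
      by apply: pt_eq => /=; rewrite -!Rmult_assoc ee; ring.
    exact: Xy.
Qed.

(** * Reduction to the cone p + Lambda_1 *)

(* Sends the direction [e] times axis [i] to the positive first axis. *)
Definition align (i : idx) (e : R) (q : pt) : pt :=
  match i with
  | I1 => Pt (e * px q) (py q) (pz q)
  | I2 => Pt (e * py q) (e * px q) (pz q)
  | I3 => Pt (e * pz q) (py q) (e * px q)
  end.

Section Align.
Variables (i : idx) (e : R).
Hypothesis he : e = 1 \/ e = -1.

Lemma align_involutive q : align i e (align i e q) = q.
Proof. by case: he => ->; case: i; apply: pt_eq => /=; ring. Qed.

Lemma px_align q : px (align i e q) = e * coord q i.
Proof. by case: i. Qed.

Lemma dinf_align a b : dinf (align i e a) (align i e b) = dinf a b.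
Proof.
have Rabs_e u v : Rabs (e * u - e * v) = Rabs (u - v).
  by rewrite -Rmult_minus_distr_l Rabs_mult Rabs_sign // Rmult_1_l.
rewrite !dinfE; case: i => /=; rewrite !Rabs_e //;
  by rewrite /Rmax; repeat case: Rle_dec; lra.
Qed.

Lemma S2_align q : S2 (align i e q) <-> S2 q.
Proof. by case: q => x y z; rewrite /S2; case: he => ->; case: i => /=; split; lra. Qed.

Lemma D3_align q : D3 (align i e q) <-> D3 q.
Proof. by case: q => x y z; rewrite /D3; case: he => ->; case: i => /=; split; lra. Qed.

Lemma cone_meets_align X p :
  cone_meets X p i e <-> cone_meets (fun q => X (align i e q)) (align i e p) I1 1.
Proof.
rewrite (cone_meetsP _ _ _ _ he) (cone_meetsP _ _ I1 _ (or_introl erefl)) /=.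
split=> [[y [Xy ey]] | [y [Xy ey]]].
- exists (align i e y); rewrite align_involutive dinf_align !px_align -ey; split=> //; ring.
- exists (align i e y); split=> //.
  rewrite -{2}(align_involutive p) dinf_align -ey px_align.
  have -> : px y = e * coord (align i e y) i by rewrite -px_align align_involutive.
  ring.
Qed.

Lemma minimal_pts_align X p :
  minimal_pts X p -> minimal_pts (fun q => X (align i e q)) (align i e p).
Proof.
move=> minp x Xx; have [y [Xy geo]] := minp _ Xx.
exists (align i e y); rewrite align_involutive; split=> //.
by rewrite -(align_involutive x) !dinf_align.
Qed.

End Align.

(** * Minimal points are surrounding *)

Definition in_cone1 (p y : pt) : Prop :=
  Rabs (py y - py p) <= px y - px p /\ Rabs (pz y - pz p) <= px y - px p.

Definition in_opp_cone1_int (p x : pt) : Prop :=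
  Rabs (py x - py p) < px p - px x /\ Rabs (pz x - pz p) < px p - px x.

Lemma in_cone1_dinf p y : in_cone1 p y <-> px y - px p = dinf y p.
Proof.
split=> [[le2 le3] | e].
- have ge0 : 0 <= px y - px p by have := Rabs_pos (py y - py p); lra.
  by rewrite dinfE Rabs_pos_eq // Rmax_left //; apply: Rmax_lub.
- by rewrite /in_cone1 e; split; [exact: (coord_le_dinf y p I2) | exact: (coord_le_dinf y p I3)].
Qed.

Lemma cone1P X p : cone_meets X p I1 1 <-> exists y, X y /\ in_cone1 p y.
Proof.
rewrite (cone_meetsP _ _ _ _ (or_introl erefl)) /=.
by split=> [[y [Xy ey]] | [y [Xy /in_cone1_dinf ey]]]; exists y;
  rewrite ?in_cone1_dinf; split=> //; lra.
Qed.

Lemma opp_cone1_geodesic x p y : in_opp_cone1_int p x ->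
  dinf x p + dinf p y = dinf x y -> in_cone1 p y.
Proof.
move=> [x2 x3] geo; have [i [xp py0 same]] := dinf_between _ _ _ geo.
have dxp : px p - px x = dinf x p.
  rewrite dinf_sym -in_cone1_dinf /in_cone1 (Rabs_minus_sym (py p)) (Rabs_minus_sym (pz p)); lra.
apply/in_cone1_dinf; rewrite dinf_sym.
case: i xp py0 same => /= xp py0 same; try lra.
have up : 0 <= px y - px p by have := Rabs_pos (py x - py p); nra.
by rewrite -py0 Rabs_minus_sym Rabs_right; lra.
Qed.

Lemma disk_cone1_witness a b c : b * b + c * c <= 1 ->
  exists x, S2 x /\ (in_cone1 (Pt a b c) x \/ in_opp_cone1_int (Pt a b c) x).
Proof.
move=> disk; set h := sqrt (1 - b * b - c * c).
have hh : h * h = 1 - b * b - c * c by apply: sqrt_sqrt; lra.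
exists (Pt h b c); split; first by rewrite /S2 /=; nra.
rewrite /in_cone1 /in_opp_cone1_int /= !Rminus_diag Rabs_R0.
have := sqrt_pos (1 - b * b - c * c); rewrite -/h; lra.
Qed.

Lemma outward_sq_gt1 b c u v : 0 <= (u - b) * b -> Rabs (v - c) <= Rabs (u - b) ->
  Rabs c <= Rabs b -> 1 < b * b + c * c -> 1 < u * u + v * v.
Proof. by move=> *; split_Rabs; nra. Qed.

(* For [p] outside the cylinder over the unit disk, no geodesic from the
   antipode of the radial projection of [p] can continue inside the ball. *)
Lemma antipode_geodesic_not_D3 a b c r y :
  b * b + c * c = 1 -> 1 < r -> Rabs a <= (r - 1) * Rmax (Rabs b) (Rabs c) ->
  dinf (Pt 0 (- b) (- c)) (Pt a (r * b) (r * c)) + dinf (Pt a (r * b) (r * c)) y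
    = dinf (Pt 0 (- b) (- c)) y -> ~ D3 y.
Proof.
move=> unit r1 near_a geo; rewrite /D3.
have [i [xp py0 same]] := dinf_between _ _ _ geo.
have := coord_le_dinf (Pt 0 (- b) (- c)) (Pt a (r * b) (r * c)) I2.
have := coord_le_dinf (Pt 0 (- b) (- c)) (Pt a (r * b) (r * c)) I3.
have Rabs_out u : Rabs (- u - r * u) = (1 + r) * Rabs u.
  have -> : - u - r * u = - ((1 + r) * u) by ring.
  by rewrite Rabs_Ropp Rabs_mult Rabs_pos_eq //; lra.
rewrite /= !Rabs_out.
case: i xp py0 same => /= xp py0 same le3 le2.
- have : Rabs a = dinf (Pt 0 (- b) (- c)) (Pt a (r * b) (r * c)).
    by rewrite -xp Rminus_0_l Rabs_Ropp.
  move: near_a; rewrite /Rmax; case: Rle_dec => _ near_a ea; exfalso; split_Rabs; nra.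
- rewrite Rabs_out in xp.
  have := dinf_ge0 (Pt a (r * b) (r * c)) y.
  have := coord_le_dinf (Pt a (r * b) (r * c)) y I3; rewrite /= -py0 => le.
  have := outward_sq_gt1 (r * b) (r * c) (py y) (pz y).
  rewrite (Rabs_minus_sym (py y)) (Rabs_minus_sym (pz y)) !Rabs_mult (Rabs_pos_eq r); last lra.
  by move=> H _; have := H ltac:(nra) le ltac:(nra) ltac:(nra); nra.
- rewrite Rabs_out in xp.
  have := dinf_ge0 (Pt a (r * b) (r * c)) y.
  have := coord_le_dinf (Pt a (r * b) (r * c)) y I2; rewrite /= -py0 => le.
  have := outward_sq_gt1 (r * c) (r * b) (pz y) (py y).
  rewrite (Rabs_minus_sym (py y)) (Rabs_minus_sym (pz y)) !Rabs_mult (Rabs_pos_eq r); last lra.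
  by move=> H _; have := H ltac:(nra) le ltac:(nra) ltac:(nra); nra.
Qed.

Lemma outside_cone1_witness a b c r : b * b + c * c = 1 -> 1 < r ->
  (exists x, S2 x /\ (in_cone1 (Pt a (r * b) (r * c)) x
                      \/ in_opp_cone1_int (Pt a (r * b) (r * c)) x)) \/
  (exists x, S2 x /\ forall y,
     dinf x (Pt a (r * b) (r * c)) + dinf (Pt a (r * b) (r * c)) y = dinf x y -> ~ D3 y).
Proof.
move=> unit r1; set M := (r - 1) * Rmax (Rabs b) (Rabs c).
have Rabs_in u : Rabs (u - r * u) = (r - 1) * Rabs u.
  have -> : u - r * u = - ((r - 1) * u) by ring.
  by rewrite Rabs_Ropp Rabs_mult Rabs_pos_eq //; lra.
have [le_b le_c] : (r - 1) * Rabs b <= M /\ (r - 1) * Rabs c <= M.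
  by split; apply: Rmult_le_compat_l; [lra | apply: Rmax_l | lra | apply: Rmax_r].
have Sw : S2 (Pt 0 b c) by rewrite /S2 /=; lra.
have [a_low | a_high] := Rle_lt_dec a (- M).
  left; exists (Pt 0 b c); split=> //; left.
  by rewrite /in_cone1 /= !Rabs_in; lra.
have [a_mid | a_top] := Rle_lt_dec a M.
  right; exists (Pt 0 (- b) (- c)); split; first by rewrite /S2 /=; lra.
  by move=> y; apply: antipode_geodesic_not_D3 => //; rewrite -/M; apply: Rabs_le; lra.
left; exists (Pt 0 b c); split=> //; right.
by rewrite /in_opp_cone1_int /= !Rabs_in; lra.
Qed.

Lemma sphere_cone1_witness p :
  (exists x, S2 x /\ (in_cone1 p x \/ in_opp_cone1_int p x)) \/
  (exists x, S2 x /\ forall y, dinf x p + dinf p y = dinf x y -> ~ D3 y).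
Proof.
case: p => a b c.
have [disk | out] := Rle_lt_dec (b * b + c * c) 1; first by left; exact: disk_cone1_witness.
set r := sqrt (b * b + c * c).
have rr : r * r = b * b + c * c by apply: sqrt_sqrt; lra.
have r1 : 1 < r by have := sqrt_pos (b * b + c * c); rewrite -/r; nra.
have -> : Pt a b c = Pt a (r * (b / r)) (r * (c / r)) by congr Pt; field; lra.
apply: outside_cone1_witness => //.
have -> : b / r * (b / r) + c / r * (c / r) = (b * b + c * c) / (r * r) by field; lra.
by rewrite -rr /Rdiv Rinv_r //; nra.
Qed.

Lemma minimal_cone1 X p : (forall q, S2 q -> X q) -> (forall q, X q -> D3 q) ->
  minimal_pts X p -> cone_meets X p I1 1.
Proof.
move=> S2X XD3 minp; apply/cone1P.
have [[x [Sx [up | down]]] | [x [Sx off]]] := sphere_cone1_witness p.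
- by exists x; split=> //; apply: S2X.
- have [y [Xy geo]] := minp _ (S2X _ Sx).
  by exists y; split=> //; apply: (opp_cone1_geodesic x).
- have [y [Xy geo]] := minp _ (S2X _ Sx).
  by case: (off y geo); apply: XD3.
Qed.

Lemma minimal_surrounding X p : (forall q, S2 q -> X q) -> (forall q, X q -> D3 q) ->
  minimal_pts X p -> surrounding X p.
Proof.
move=> S2X XD3 minp i e he; apply/(cone_meets_align _ _ he).
apply: minimal_cone1; last exact: minimal_pts_align.
- by move=> q /(S2_align i e he); apply: S2X.
- by move=> q /XD3 /(D3_align i e he).
Qed.

Lemma surrounding_geodesic X p q : surrounding X p ->
  exists y, X y /\ dinf q p + dinf p y = dinf q y.
Proof.
move=> surr; have [i qp] := dinf_attained q p.
have [e [he eqp]] : exists e, (e = 1 \/ e = -1) /\ e * (coord q i - coord p i) = - dinf q p.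
  rewrite qp; case: (Rle_lt_dec 0 (coord q i - coord p i)) => s.
  - by exists (-1); split; [right | rewrite Rabs_pos_eq //; ring].
  - by exists 1; split; [left | rewrite Rabs_left //; ring].
have [y [Xy eyp]] := (cone_meetsP _ _ _ _ he).1 (surr i e he).
exists y; split=> //; apply: Rle_antisym; last exact: dinf_triangle.
have := coord_le_dinf q y i; have := Rle_abs (e * (coord y i - coord q i)).
rewrite (dinf_sym p y) Rabs_mult Rabs_sign // Rabs_minus_sym; lra.
Qed.

Lemma surrounding_minimal X p : surrounding X p -> minimal_pts X p.
Proof. by move=> surr x _; apply: surrounding_geodesic. Qed.

Lemma cone1_lift_to_S2 X Y p : (forall q, X q -> D3 q) -> (forall q, S2 q -> Y q) ->
  cone_meets X p I1 1 -> cone_meets Y p I1 1.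
Proof.
move=> XD3 S2Y /cone1P [y [/XD3 Dy [le2 le3]]]; apply/cone1P.
set h := sqrt (1 - py y ^ 2 - pz y ^ 2).
have hh : h * h = 1 - py y ^ 2 - pz y ^ 2 by apply: sqrt_sqrt; rewrite /D3 in Dy; nra.
have y1h : px y <= h.
  by have := sqrt_pos (1 - py y ^ 2 - pz y ^ 2); rewrite -/h; rewrite /D3 in Dy; nra.
exists (Pt h (py y) (pz y)); split; first by apply: S2Y; rewrite /S2 /=; nra.
by rewrite /in_cone1 /=; lra.
Qed.

Lemma cone_meets_lift_to_S2 X Y p i e : e = 1 \/ e = -1 ->
  (forall q, X q -> D3 q) -> (forall q, S2 q -> Y q) ->
  cone_meets X p i e -> cone_meets Y p i e.
Proof.
move=> he XD3 S2Y; rewrite !(cone_meets_align i e he).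
apply: cone1_lift_to_S2.
- by move=> q /XD3 /(D3_align i e he).
- by move=> q /(S2_align i e he) /S2Y.
Qed.

Lemma surrounding_D3_S2 p : surrounding D3 p <-> surrounding S2 p.
Proof.
split=> surr i e he.
- exact: (cone_meets_lift_to_S2 _ _ _ _ _ he (fun _ => id) (fun _ => id) (surr i e he)).
- have [z [Lz Sz]] := surr i e he; exists z; split=> //.
  by move: Sz; rewrite /S2 /D3 => ->; lra.
Qed.

(** * Compactness *)

Definition of_triple (v : R * R * R) : pt := Pt v.1.1 v.1.2 v.2.

Definition sqnorm (v : R * R * R) : R := v.1.1 * v.1.1 + v.1.2 * v.1.2 + v.2 * v.2.

Lemma sqnorm_continuous : continuous sqnorm.
Proof.
move=> v.
have c11 : continuous (fun w : R * R * R => w.1.1).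
  by move=> w; apply: continuous_comp; apply: cvg_fst.
have c12 : continuous (fun w : R * R * R => w.1.2).
  by move=> w; apply: continuous_comp; [apply: cvg_fst | apply: cvg_snd].
have c2 : continuous (fun w : R * R * R => w.2) by move=> w; apply: cvg_snd.
have cM (f : R * R * R -> R) : continuous f -> {for v, continuous (fun w => f w * f w)}.
  by move=> cf; exact: (@continuousM R _ f f v (cf v) (cf v)).
exact: (@continuousD R R^o _ _ _ v (@continuousD R R^o _ _ _ v (cM _ c11) (cM _ c12)) (cM _ c2)).
Qed.

Lemma compact_in_unit_ball (A : set (R * R * R)) :
  closed A -> (forall v, A v -> sqnorm v <= 1) -> compact A.
Proof.
move=> clA inA; have I := @segment_compact R (-1) 1.
apply: (subclosed_compact clA (compact_setX (compact_setX I I) I)).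
move=> [[x y] z] /inA; rewrite /sqnorm /= => xyz.
have bound u : u * u <= 1 -> (-1 <= u)%R && (u <= 1)%R.
  move=> uu; have [lo hi] : -1 <= u /\ u <= 1 by split; nra.
  by apply/andP; split; apply/RleP; [exact: lo | exact: hi].
by rewrite /= !in_itv /=; split; [split|]; apply: bound; nra.
Qed.

Lemma S2_compact : compact [set v | S2 (of_triple v)].
Proof.
apply: compact_in_unit_ball => [|v]; last by rewrite /S2 /sqnorm /=; lra.
have -> : [set v | S2 (of_triple v)] = sqnorm @^-1` [set x | x = 1].
  by apply/seteqP; split=> v /=; rewrite /S2 /sqnorm /=; lra.
exact: preimage_closed (fun v _ => sqnorm_continuous v) (@closed_eq R 1).
Qed.

Lemma D3_compact : compact [set v | D3 (of_triple v)].
Proof.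
apply: compact_in_unit_ball => [|v]; last by rewrite /D3 /sqnorm /=; lra.
have -> : [set v | D3 (of_triple v)] = sqnorm @^-1` [set x | (x <= 1)%R].
  apply/seteqP; split=> v /=; rewrite /D3 /sqnorm /=.
  - by move=> h; apply/RleP; rewrite -R1E; lra.
  - by move/RleP; rewrite -R1E; lra.
exact: preimage_closed (fun v _ => sqnorm_continuous v) (@closed_le R 1).
Qed.

Lemma lipschitz_continuous (f : R * R * R -> R) (L : R) : 0 < L ->
  (forall v w, Rabs (f v - f w) <= L * dinf (of_triple v) (of_triple w)) -> continuous f.
Proof.
move=> L0 lip v; apply/(@cvgrPdist_le _ R^o) => e /RltP e0.
have d0 : 0 < e / L by apply: Rdiv_lt_0_compat.
have : nbhs v (ball v (e / L)) by apply: nbhsx_ballx; apply/RltP.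
apply: filterS => w; rewrite /ball /= => -[[/RltP b1 /RltP b2] /RltP b3]; apply/RleP.
have close : dinf (of_triple v) (of_triple w) <= e / L.
  by rewrite dinfE /=; apply: Rmax_lub; [|apply: Rmax_lub]; apply: Rlt_le.
apply: Rle_trans (lip v w) _.
have <- : L * (e / L) = e by field; lra.
exact: Rmult_le_compat_l (Rlt_le _ _ L0) close.
Qed.

Lemma lipschitz_attains_max (X : pt -> Prop) (f : pt -> R) (L : R) :
  compact [set v | X (of_triple v)] -> (exists q, X q) -> 0 < L ->
  (forall a b, Rabs (f a - f b) <= L * dinf a b) ->
  exists c, X c /\ forall t, X t -> f t <= f c.
Proof.
move=> cX [q Xq] L0 lip.
have of_tripleK t : of_triple (px t, py t, pz t) = t by case: t.
have nonempty : [set v | X (of_triple v)] !=set0.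
  by exists (px q, py q, pz q); rewrite /= of_tripleK.
have cont : {within [set v | X (of_triple v)], continuous (fun v => f (of_triple v))}.
  by apply: continuous_subspaceT; exact: (lipschitz_continuous _ _ L0 (fun v w => lip _ _)).
have [c Xc max] := compact_EVT_max nonempty cX cont.
exists (of_triple c); split; first by move: Xc; rewrite inE.
move=> t Xt; rewrite -(of_tripleK t); apply/RleP; apply: max.
by rewrite inE /= of_tripleK.
Qed.

(** * Tight spans *)

Lemma supdist_eq {T : Type} (f g : T -> R) (m : R) :
  (exists x, Rabs (f x - g x) = m) -> (forall x, Rabs (f x - g x) <= m) -> supdist f g = m.
Proof.
move=> [x0 fg0] le_m; rewrite /supdist (is_lub_Rbar_unique _ m) //.
by split=> [r [x ->] | b ub]; [exact: le_m | apply: ub; exists x0].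
Qed.

Lemma real_Lub_Rbar_lub (E : R -> Prop) (r0 M : R) : E r0 -> (forall r, E r -> r <= M) ->
  (forall r, E r -> r <= real (Lub_Rbar E)) /\
  (forall M', (forall r, E r -> r <= M') -> real (Lub_Rbar E) <= M').
Proof.
move=> Er0 le_M; have [ub least] := Lub_Rbar_correct E.
have : Rbar_le (Lub_Rbar E) M by apply: least => r /le_M.
have : Rbar_le r0 (Lub_Rbar E) by apply: ub.
case: (Lub_Rbar E) ub least => [l | | ] //= ub least _ _.
by split=> [r Er | M' leM']; [exact: ub | exact: least M' leM'].
Qed.

Section TightSpan.
Variable X : pt -> Prop.
Hypothesis X_compact : compact [set v | X (of_triple v)].
Hypothesis X_nonempty : exists q, X q.
Hypothesis X_bounded : exists c M, forall q, X q -> dinf c q <= M.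
Hypothesis X_minimal_surrounding : forall p, minimal_pts X p -> surrounding X p.

Definition dist_to (p : pt) (y : sub X) : R := dinf p (proj1_sig y).

Lemma dist_to_Delta p : in_Delta (subd X) (dist_to p).
Proof.
have [c [M le_M]] := X_bounded; split.
- exists (dinf p c + M) => y; rewrite /dist_to Rabs_pos_eq; last exact: dinf_ge0.
  apply: Rle_trans (dinf_triangle _ c _) _.
  exact: Rplus_le_compat_l (le_M _ (proj2_sig y)).
- move=> x x'; apply: Rle_ge; rewrite /subd /dist_to (dinf_sym p).
  exact: dinf_triangle.
Qed.

Lemma dist_to_tight p : minimal_pts X p -> in_tight_span (subd X) (dist_to p).
Proof.
move=> minp; split=> [|g [_ gD] le_g x]; first exact: dist_to_Delta.
apply: Rle_antisym; first exact: le_g.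
have [y [Xy geo]] := minp _ (proj2_sig x).
have := gD x (exist _ y Xy); have := le_g (exist _ y Xy).
rewrite /subd /dist_to /= (dinf_sym p (proj1_sig x)); lra.
Qed.

(* If a farthest-point witness for [x] failed, lowering [dist_to p] at [x] alone
   would stay in [Delta], contradicting tightness. *)
Lemma tight_dist_to_minimal p : in_tight_span (subd X) (dist_to p) -> minimal_pts X p.
Proof.
move=> [_ tight] x Xx.
have lip a b : Rabs ((dinf x a - dinf p a) - (dinf x b - dinf p b)) <= 2 * dinf a b.
  have := dinf_triangle x a b; have := dinf_triangle x b a.
  have := dinf_triangle p a b; have := dinf_triangle p b a.
  rewrite (dinf_sym b a); move=> *; apply: Rabs_le; split; lra.
have [c [Xc cmax]] := lipschitz_attains_max _ _ _ X_compact X_nonempty Rlt_0_2 lip.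
have [far | near] := Rle_lt_dec (dinf x p) (dinf x c - dinf p c).
  exists c; split=> //; apply: Rle_antisym; last exact: dinf_triangle.
  by have := dinf_triangle x p c; rewrite (dinf_sym p c) in far *; lra.
exfalso; set s := Rmax (dinf x c - dinf p c) 0.
have [s_ge s_ge0] : dinf x c - dinf p c <= s /\ 0 <= s by split; [apply: Rmax_l | apply: Rmax_r].
pose g (u : sub X) := if pselect (proj1_sig u = x) then s else dist_to p u.
have gD : in_Delta (subd X) g.
  have [[M bM] Dp] := dist_to_Delta p; split.
    exists (Rmax s M) => u; rewrite /g; case: pselect => [ux | nux] /=.
    + by rewrite Rabs_pos_eq //; apply: Rmax_l.
    + exact: Rle_trans (bM u) (Rmax_r _ _).
  move=> u u'; rewrite /g /subd; apply: Rle_ge.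
  case: (pselect (proj1_sig u = x)) => [ux | nux];
    case: (pselect (proj1_sig u' = x)) => [u'x | nu'x] /=.
  - by rewrite ux u'x dinf_refl; lra.
  - by have := cmax _ (proj2_sig u'); rewrite /dist_to ux; lra.
  - by have := cmax _ (proj2_sig u); rewrite /dist_to u'x dinf_sym; lra.
  - by have := Dp u u'; rewrite /subd; lra.
have le_g u : g u <= dist_to p u.
  rewrite /g /dist_to; case: pselect => [ux | nux] /=; last lra.
  rewrite ux dinf_sym; apply: Rmax_lub; [lra | exact: dinf_ge0].
have := tight g gD le_g (exist _ x Xx); rewrite /g /dist_to /=.
case: pselect => [_ | //] /=.
have := cmax x Xx; have := dinf_sym x p; rewrite dinf_refl /s /Rmax; case: Rle_dec; lra.
Qed.

Lemma supdist_dist_to p q : surrounding X p -> supdist (dist_to p) (dist_to q) = dinf p q.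
Proof.
move=> surr; apply: supdist_eq => [|y]; last first.
  rewrite /dist_to; have := dinf_triangle p q (proj1_sig y).
  have := dinf_triangle q p (proj1_sig y); rewrite (dinf_sym q p).
  by move=> *; apply: Rabs_le; split; lra.
have [y [Xy geo]] := surrounding_geodesic _ _ q surr.
exists (exist _ y Xy); rewrite /dist_to /= -geo (dinf_sym q p).
have -> : dinf p y - (dinf p q + dinf p y) = - dinf p q by ring.
by rewrite Rabs_Ropp Rabs_pos_eq //; apply: dinf_ge0.
Qed.

Lemma tight_span_eq_dist_to f : in_tight_span (subd X) f -> exists p, f = dist_to p.
Proof.
move=> [[_ fD] tight]; have [x0 X0] := X_nonempty.
pose E i r := exists x : sub X, r = coord (proj1_sig x) i - f x.
have E_le i (x x' : sub X) : coord (proj1_sig x') i - f x' <= coord (proj1_sig x) i + f x.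
  have := fD x x'; rewrite /subd => /Rge_le.
  have := coord_le_dinf (proj1_sig x') (proj1_sig x) i; rewrite dinf_sym.
  have := Rle_abs (coord (proj1_sig x') i - coord (proj1_sig x) i); lra.
set y0 : sub X := exist _ x0 X0.
have E_y0 i : E i (coord x0 i - f y0) by exists y0.
have E_ub i r : E i r -> r <= coord x0 i + f y0 by move=> [x ->]; exact: (E_le i y0 x).
have lub i := real_Lub_Rbar_lub _ _ _ (E_y0 i) (E_ub i).
pose p := Pt (real (Lub_Rbar (E I1))) (real (Lub_Rbar (E I2))) (real (Lub_Rbar (E I3))).
have coord_p i : coord p i = real (Lub_Rbar (E i)) by case: i.
have le_f x : dist_to p x <= f x.
  rewrite /dist_to; have [i ->] := dinf_attained p (proj1_sig x).
  have [ub least] := lub i; rewrite coord_p; apply: Rabs_le; split.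
  - by have := ub _ (ex_intro _ x erefl); lra.
  - have : real (Lub_Rbar (E i)) <= coord (proj1_sig x) i + f x.
      by apply: least => r [x' ->]; apply: E_le.
    lra.
exists p; apply: funext => x; apply: esym.
exact: tight _ (dist_to_Delta p) le_f x.
Qed.

Definition surrounding_to_tight_span (a : sub (surrounding X)) : tight_span (subd X) :=
  exist _ (dist_to (proj1_sig a)) (dist_to_tight _ (surrounding_minimal _ _ (proj2_sig a))).

Lemma isometric_surrounding_tight_span :
  isometric (sub (surrounding X)) (tight_span (subd X))
            (subd (surrounding X)) (ts_dist (subd X)).
Proof.
exists surrounding_to_tight_span; split=> [a a' | [f tf]].
  exact: supdist_dist_to (proj2_sig a).
have [p fp] := tight_span_eq_dist_to _ tf.
have surr : surrounding X p.
  by apply: X_minimal_surrounding; apply: tight_dist_to_minimal; rewrite -fp.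
by exists (exist _ p surr); apply: eq_exist; rewrite fp.
Qed.

End TightSpan.

Lemma isometric_trans {A B C : Type} {dA : A -> A -> R} {dB : B -> B -> R} {dC : C -> C -> R} :
  isometric A B dA dB -> isometric B C dB dC -> isometric A C dA dC.
Proof.
move=> [f [f_iso f_onto]] [g [g_iso g_onto]]; exists (fun a => g (f a)); split.
- by move=> a a'; rewrite g_iso f_iso.
- by move=> c; have [b <-] := g_onto c; have [a <-] := f_onto b; exists a.
Qed.

Lemma isometric_sym {A B : Type} {dA : A -> A -> R} {dB : B -> B -> R} :
  (forall a, dA a a = 0) -> (forall a a', dA a a' = 0 -> a = a') ->
  isometric A B dA dB -> isometric B A dB dA.
Proof.
move=> dA_refl dA_sep [f [f_iso f_onto]].
pose g b := proj1_sig (cid (f_onto b)).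
have fgK b : f (g b) = b by rewrite /g; case: cid.
exists g; split=> [b b' | a]; first by rewrite -f_iso !fgK.
by exists (f a); apply: dA_sep; rewrite -f_iso fgK f_iso dA_refl.
Qed.

Lemma isometric_sub_eq (X Y : pt -> Prop) : (forall p, X p <-> Y p) ->
  isometric (sub X) (sub Y) (subd X) (subd Y).
Proof.
move=> XY; exists (fun a => exist Y (proj1_sig a) ((XY _).1 (proj2_sig a))).
split=> // -[q Yq]; exists (exist X q ((XY q).2 Yq)); exact: eq_exist.
Qed.

Lemma subd_refl (X : pt -> Prop) (a : sub X) : subd X a a = 0.
Proof. exact: dinf_refl. Qed.

Lemma subd_eq0 (X : pt -> Prop) (a b : sub X) : subd X a b = 0 -> a = b.
Proof. by case: a b => [a Xa] [b Xb] /dinf_eq0 ab; apply: eq_exist. Qed.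

Lemma S2_D3 q : S2 q -> D3 q.
Proof. by rewrite /S2 /D3 => ->; lra. Qed.

Lemma S2_nonempty : exists q, S2 q.
Proof. by exists (Pt 1 0 0); rewrite /S2 /=; lra. Qed.

Lemma D3_nonempty : exists q, D3 q.
Proof. by have [q /S2_D3 Dq] := S2_nonempty; exists q. Qed.

Lemma D3_bounded : exists c M, forall q, D3 q -> dinf c q <= M.
Proof.
exists (Pt 0 0 0), 1 => q; rewrite /D3 dinfE /= => q1.
have le1 u : u ^ 2 <= 1 -> Rabs (0 - u) <= 1.
  by move=> u1; rewrite Rminus_0_l Rabs_Ropp; apply: Rabs_le; split; nra.
by apply: Rmax_lub; [|apply: Rmax_lub]; apply: le1; nra.
Qed.

Lemma S2_bounded : exists c M, forall q, S2 q -> dinf c q <= M.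
Proof. by have [c [M bD3]] := D3_bounded; exists c, M => q /S2_D3 /bD3. Qed.

Theorem theorem5p17 :
  (* (1) *)
  ((forall p, surrounding S2 p <-> minimal_pts S2 p) /\
   isometric (sub (surrounding S2)) (tight_span (subd S2))
             (subd (surrounding S2)) (ts_dist (subd S2))) /\
  (* (2) *)
  ((forall p, surrounding D3 p <-> minimal_pts D3 p) /\
   (forall p, minimal_pts D3 p <-> surrounding S2 p) /\
   isometric (sub (surrounding D3)) (tight_span (subd D3))
             (subd (surrounding D3)) (ts_dist (subd D3)) /\
   isometric (tight_span (subd D3)) (tight_span (subd S2))
             (ts_dist (subd D3)) (ts_dist (subd S2))).
Proof.
have minS2 p : surrounding S2 p <-> minimal_pts S2 p.
  split; [exact: surrounding_minimal | exact: minimal_surrounding (fun _ => id) S2_D3].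
have minD3 p : surrounding D3 p <-> minimal_pts D3 p.
  split; [exact: surrounding_minimal | exact: minimal_surrounding S2_D3 (fun _ => id)].
have isoS2 := isometric_surrounding_tight_span _ S2_compact S2_nonempty S2_bounded
  (fun p => (minS2 p).2).
have isoD3 := isometric_surrounding_tight_span _ D3_compact D3_nonempty D3_bounded
  (fun p => (minD3 p).2).
split; first by split.
split; first exact: minD3.
split; first by move=> p; rewrite -minD3; exact: surrounding_D3_S2.
split; first exact: isoD3.
apply: isometric_trans (isometric_sym (@subd_refl _) (@subd_eq0 _) isoD3) _.
exact: isometric_trans (isometric_sub_eq _ _ surrounding_D3_S2) isoS2.
Qed.
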